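(* Let $(X,d)$ be a separable metric space admitting a weak convergence, and let $p\ge 1$. For any $\mu\in\mathcal{P}_{p-1}(X)$, the set $M_p(\mu)$ is non-empty and $d$-compact.
   Context: A convergence $c$ on a set $X$ is a rule assigning at most one point of $X$ as the ''limit'' of each sequence in $X$, such that whenever a sequence has limit $x$, every subsequence also has limit $x$. A convergence $w$ on $X$ is a weak convergence for $(X,d)$ if: (W1) whenever $\sup_n d(x_n,y)<\infty$ for some $y$, some subsequence converges in $w$ to some point of $X$; (W2) whenever $x_n\to x$ in $w$, $d(x,y)\le\liminf_n d(x_n,y)$ for all $y\in X$; (W3) whenever $x_n\to x$ in $w$ and $d(x_n,y)\to d(x,y)$ for some $y\in X$, then $d(x_n,x)\to0$. $(X,d)$ admits a weak convergence if such a $w$ exists. $\mathcal{P}_{p-1}(X)$ is the set of Borel probability measures $\mu$ on $(X,d)$ with $\int_X d^{p-1}(x,y)\,d\mu(y)<\infty$ for some (equivalently all) $x\in X$. For such $\mu$, $W_p(\mu,x,x'):=\int_X (d^p(x,y)-d^p(x',y))\,d\mu(y)$ and $M_p(\mu):=\{x\in X: W_p(\mu,x,x')\le 0 \text{ for all } x'\in X\}$. *)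

From HB Require Import structures.
From mathcomp Require Import all_boot all_order all_algebra.
From mathcomp Require Import all_classical all_reals all_analysis.
Set Implicit Arguments. Unset Strict Implicit. Unset Printing Implicit Defensive.
Import Order.TTheory GRing.Theory Num.Theory numFieldNormedType.Exports.
Local Open Scope classical_set_scope.
Local Open Scope ring_scope.

Section MetricDefs.
Variables (R : realType) (X : pointedType) (d : X -> X -> R).

Definition is_metric : Prop :=
  [/\ (forall x y, 0 <= d x y),
      (forall x y, d x y = 0 <-> x = y),
      (forall x y, d x y = d y x) &
      (forall x y z, d x z <= d x y + d y z)].

Definition dball (x : X) (r : R) : set X := [set y | d x y < r].

Definition d_open (U : set X) : Prop :=
  forall x, U x -> exists2 r : R, 0 < r & dball x r `<=` U.

Definition d_compact (K : set X) : Prop :=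
  forall (I : Type) (U : I -> set X),
    (forall i, d_open (U i)) -> K `<=` \bigcup_i U i ->
    exists2 F : set I, finite_set F & K `<=` \bigcup_(i in F) U i.

Definition d_separable : Prop :=
  exists D : set X, countable D /\
    forall x (e : R), 0 < e -> exists2 y, D y & d x y < e.

Definition is_convergence (c : (nat -> X) -> X -> Prop) : Prop :=
  (forall u x y, c u x -> c u y -> x = y) /\
  (forall u x (phi : nat -> nat), {homo phi : n m / (n < m)%N} ->
      c u x -> c (u \o phi) x).

Definition is_weak_convergence (w : (nat -> X) -> X -> Prop) : Prop :=
  [/\ is_convergence w,
      (* W1 *)
      (forall u : nat -> X, (exists y, exists M : R, forall n, d (u n) y <= M) ->
         exists (phi : nat -> nat) (x : X),
           {homo phi : n m / (n < m)%N} /\ w (u \o phi) x),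
      (* W2 *)
      (forall u x, w u x -> forall y,
         ((d x y)%:E <= limn_einf (fun n => (d (u n) y)%:E))%E) &
      (* W3 *)
      (forall u x, w u x ->
         (exists y, (fun n => d (u n) y) @ \oo --> (d x y : R)) ->
         (fun n => d (u n) x) @ \oo --> (0 : R))].

Definition admits_weak_convergence : Prop :=
  exists w, is_weak_convergence w.

Definition borel_d := g_sigma_algebraType d_open.

Definition finite_moment (q : R) (mu : probability borel_d R) : Prop :=
  exists x : X, (\int[mu]_y ((d x y) `^ q)%:E < +oo)%E.

Definition Wp (p : R) (mu : probability borel_d R) (x x' : X) : \bar R :=
  (\int[mu]_y ((d x y) `^ p - (d x' y) `^ p)%:E)%E.

Definition Mp (p : R) (mu : probability borel_d R) : set X :=
  [set x | forall x', (Wp p mu x x' <= 0)%E].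

End MetricDefs.

Arguments finite_moment {R X} d q mu.
Arguments Wp {R X} d p mu x x'.
Arguments Mp {R X} d p mu _.

(* Fix x0 with finite (p-1)-th moment and let F x := W_p(mu, x, x0). Then
   W_p(mu, x, x') = F x - F x', so M_p(mu) is the set of minimisers of F, and the
   bound |a^p - b^p| <= p |a - b| max(a, b)^(p-1) makes F finite. Fatou's lemma,
   with the integrable minorant -p r d(x0, .)^(p-1) on d-balls of radius r around x0,
   shows that F is coercive and, by (W2), lower semicontinuous along weakly
   convergent bounded sequences; so a weak limit of a minimising sequence, given
   by (W1), is a minimiser.
   For compactness, let u_n be in M_p(mu) and let x be a weak limit of a
   subsequence; x lies in M_p(mu). If for every y the distances d(u_n, y)
   eventually exceeded d(x, y) + 1/(k+1) for some k, then for some k this would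
   happen on a set E of positive measure, and Fatou would give
   F x + (k+1)^(-p) mu(E) <= F x. Hence some y has liminf d(u_n, y) = d(x, y),
   and (W3) along a further subsequence gives convergence in d. Sequential
   compactness implies compactness because (X, d) is separable. *)

From HB Require Import structures.
From mathcomp Require Import all_boot all_order all_algebra.
From mathcomp Require Import all_classical all_reals all_analysis.
From mathcomp Require Import ring lra measurable_realfun unstable.
Import Order.TTheory GRing.Theory Num.Theory numFieldNormedType.Exports.
Local Open Scope classical_set_scope.
Local Open Scope ring_scope.
Set Implicit Arguments. Unset Strict Implicit.

Section PowerInequalities.
Variable R : realType.
Implicit Types a b p q : R.

Lemma powR_sub_le p a b : 1 <= p -> 0 <= a -> 0 <= b ->
  b `^ p - a `^ p <= p * (b - a) * b `^ (p - 1).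
Proof.
move=> p1 a0 b0; have [->|pn1] := eqVneq p 1.
  by rewrite subrr powRr0 !powRr1 // mul1r mulr1.
have p_gt1 : 1 < p by rewrite lt_neqAle eq_sym pn1.
have p0 : 0 < p by lra.
have bpE : b `^ p = b * b `^ (p - 1) by rewrite mulr_powRB1.
(* Young's inequality for the conjugate exponents p and p / (p - 1) *)
have := @conjugate_powR _ a (b `^ (p - 1)) p (p / (p - 1)) a0 (powR_ge0 _ _) p0.
rewrite -powRrM (_ : (p - 1) * (p / (p - 1)) = p); last by field; lra.
have q0 : 0 < p / (p - 1) by apply: divr_gt0; lra.
have pq : p^-1 + (p / (p - 1))^-1 = 1 by field; lra.
move=> /(_ q0 pq) young.
have {}young : p * (a * b `^ (p - 1)) <= a `^ p + (p - 1) * b `^ p.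
  have -> : a `^ p + (p - 1) * b `^ p = p * (a `^ p / p + b `^ p / (p / (p - 1))).
    by field; lra.
  by rewrite ler_pM2l.
have -> : p * (b - a) * b `^ (p - 1) = p * b `^ p - p * (a * b `^ (p - 1)).
  by rewrite bpE; ring.
lra.
Qed.

Lemma powR_superadd p a b : 1 <= p -> 0 <= a -> 0 <= b ->
  a `^ p + b `^ p <= (a + b) `^ p.
Proof.
move=> p1 a0 b0; have p0 : 0 < p by lra.
rewrite -(mulr_powRB1 a0 p0) -(mulr_powRB1 b0 p0) -(@mulr_powRB1 _ (a + b)) //; last lra.
rewrite mulrDl; apply: lerD; apply: ler_wpM2l => //;
  apply: ge0_ler_powR; rewrite ?nnegrE; lra.
Qed.

Lemma powRD_le q a b : 0 <= q -> 0 <= a -> 0 <= b ->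
  (a + b) `^ q <= 2 `^ q * (a `^ q + b `^ q).
Proof.
move=> q0 a0 b0.
wlog ba : a b a0 b0 / b <= a.
  move=> h; have [|/ltW] := leP b a; first exact: h.
  by rewrite addrC [a `^ q + _]addrC; apply: h.
have : (a + b) `^ q <= (2 * a) `^ q by apply: ge0_ler_powR; rewrite ?nnegrE; lra.
rewrite powRM // => /le_trans; apply; apply: ler_wpM2l; first exact: powR_ge0.
by rewrite lerDl powR_ge0.
Qed.

End PowerInequalities.

Section LiminfFacts.
Variable R : realType.
Local Open Scope ereal_scope.
Implicit Types u : (\bar R)^nat.

Lemma limn_einfE u : limn_einf u = ereal_sup (range (einfs u)).
Proof. by rewrite limn_einf_lim; apply/cvg_lim => //; exact: cvg_einfs_sup. Qed.

Lemma limn_einf_ge_near u c : (\forall n \near \oo, c <= u n) -> c <= limn_einf u.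
Proof.
move=> [N _ hN]; rewrite limn_einfE.
apply: le_trans (_ : einfs u N <= _); last by apply: ereal_sup_ubound; exists N.
by apply: le_ereal_inf_tmp => _ [k /= Nk <-]; exact: hN.
Qed.

Lemma limn_einf_gt_near u c : c < limn_einf u -> \forall n \near \oo, c < u n.
Proof.
rewrite limn_einfE => /ereal_sup_gt [_ [N _ <-]] cN.
by exists N => // n Nn; apply: (lt_le_trans cN); apply: ereal_inf_lbound; exists n.
Qed.

Lemma limn_einf_le_frequently u c :
  (forall N, exists2 n, (N <= n)%N & u n <= c) -> limn_einf u <= c.
Proof.
move=> h; rewrite limn_einfE; apply: ge_ereal_sup => _ [N _ <-].
have [n Nn unc] := h N; apply: le_trans unc; apply: ereal_inf_lbound; exists n => //.
Qed.

Lemma limn_einf_ge_approx u (c : R) :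
  (forall e, (0 < e)%R -> \forall n \near \oo, (c - e)%:E <= u n) ->
  c%:E <= limn_einf u.
Proof.
by move=> h; apply/lee_subgt0Pr => e e0; rewrite -EFinB; exact/limn_einf_ge_near/h.
Qed.

End LiminfFacts.

Lemma subseq_cvg_liminf (R : realType) (v : R^nat) (a : R) :
  (a%:E <= limn_einf (EFin \o v))%E ->
  (forall e, 0 < e -> forall N, exists2 n, (N <= n)%N & v n < a + e) ->
  exists psi : nat -> nat, {homo psi : n m / (n < m)%N} /\ v \o psi @ \oo --> a.
Proof.
move=> a_le frequently_lt.
have /choice[nx nxP] : forall jN : nat * nat,
    exists n, (jN.2 <= n)%N /\ v n < a + jN.1.+1%:R^-1.
  move=> [j N]; have j0 : 0 < j.+1%:R^-1 :> R by rewrite invr_gt0.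
  by have [n Nn vn] := frequently_lt _ j0 N; exists n.
pose psi := fix psi j := if j is j'.+1 then nx (j, (psi j').+1) else nx (0, 0)%N.
have psi_incr : {homo psi : n m / (n < m)%N}.
  by apply: (homo_ltn ltn_trans) => j; have [] := nxP (j.+1, (psi j).+1).
exists psi; split => //; apply/cvgrPdist_lt => e e0.
have psi_ub j : v (psi j) < a + j.+1%:R^-1 by case: j => [|j]; exact: (nxP _).2.
have /limn_einf_gt_near : ((a - e)%:E < limn_einf (EFin \o v))%E.
  by apply: lt_le_trans a_le; rewrite lte_fin; lra.
move=> [N _ vN]; near=> j.
have := psi_ub j; have : j.+1%:R^-1 < e.
  by near: j; exact: near_infty_natSinv_lt (PosNum e0).
have : a - e < v (psi j).
  rewrite -lte_fin; apply: vN => /=.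
  apply: leq_trans (mono_leq_infl (leq_mono psi_incr) j).
  by near: j; exists N.
rewrite /= ltr_norml; set q := j.+1%:R^-1 => *; apply/andP; split; lra.
Unshelve. all: by end_near.
Qed.

Lemma not_frequently_lt (R : realType) (v : R^nat) (a : R) :
  ~ (forall e, 0 < e -> forall N, exists2 n, (N <= n)%N & v n < a + e) ->
  exists k : nat, forall n, (k <= n)%N -> a + k.+1%:R^-1 <= v n.
Proof.
move=> /existsNP[e /not_implyP[e0 /existsNP[N noN]]].
have [k _ ke] := near_infty_natSinv_lt (PosNum e0).
exists (maxn N k) => n Kn.
have ve : a + e <= v n.
  rewrite leNgt; apply/negP => ve; apply: noN; exists n => //.
  exact: leq_trans (leq_maxl N k) Kn.
by apply: le_trans ve; rewrite lerD2l; exact/ltW/(ke _ (leq_maxr N k)).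
Qed.

Section FatouMinorant.
Context d (T : measurableType d) (R : realType).
Variable mu : {measure set T -> \bar R}.

Lemma measurable_fun_limn_einf (f : (T -> \bar R)^nat) :
  (forall n, measurable_fun setT (f n)) ->
  measurable_fun setT (fun y => limn_einf (f ^~ y)).
Proof.
move=> mf; apply: measurableT_comp => //.
by apply: measurable_fun_limn_esup => n; apply: measurableT_comp.
Qed.

Local Open Scope ereal_scope.

Lemma fatou_minorant (G : (T -> R)^nat) (h L : T -> R) :
  (forall n, mu.-integrable setT (EFin \o G n)) ->
  mu.-integrable setT (EFin \o h) -> mu.-integrable setT (EFin \o L) ->
  (forall n y, - h y <= G n y)%R -> (forall y, - h y <= L y)%R ->
  (forall y, (L y)%:E <= limn_einf (fun n => (G n y)%:E)) ->
  \int[mu]_y (L y)%:E <= limn_einf (fun n => \int[mu]_y (G n y)%:E).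
Proof.
move=> iG ih iL Gge Lge LG.
have mG n : measurable_fun setT (G n).
  by have /integrableP[/measurable_EFinP] := iG n.
have mh : measurable_fun setT h by have /integrableP[/measurable_EFinP] := ih.
have mL : measurable_fun setT L by have /integrableP[/measurable_EFinP] := iL.
have Hfin := integrable_fin_num measurableT ih.
set H := \int[mu]_y (h y)%:E in Hfin.
pose Gh n y := (h y)%:E + (G n y)%:E.
have mGh n : measurable_fun setT (Gh n).
  by apply: emeasurable_funD; apply/measurable_EFinP.
have Gh_ge0 n y : setT y -> 0 <= Gh n y.
  by move=> _; rewrite /Gh -EFinD lee_fin -lerBlDl sub0r.
have intGh n : \int[mu]_y Gh n y = H + \int[mu]_y (G n y)%:E.
  by rewrite -(integralD_EFin measurableT ih (iG n)).
have intLh : \int[mu]_y ((h y)%:E + (L y)%:E) = H + \int[mu]_y (L y)%:E.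
  by rewrite -(integralD_EFin measurableT ih iL).
rewrite -(leeD2lE _ _ Hfin) -intLh -limn_einf_shift //.
rewrite (_ : (fun n => _) = fun n => \int[mu]_y Gh n y); last first.
  by apply/funext => n; rewrite intGh.
apply: le_trans (fatou mu measurableT mGh Gh_ge0).
apply: ge0_le_integral => //.
- by move=> y _; rewrite -EFinD lee_fin -lerBlDl sub0r.
- by apply: emeasurable_funD; apply/measurable_EFinP.
- exact: measurable_fun_limn_einf.
- by move=> y _; rewrite /Gh limn_einf_shift // leeD2lE.
Qed.

End FatouMinorant.

Lemma probability_cover_gt0 d (T : measurableType d) (R : realType)
    (P : probability T R) (E : nat -> set T) :
  (forall k, measurable (E k)) -> (forall y, exists k, E k y) ->
  exists k, (0 < P (E k))%E.
Proof.
move=> mE cover; apply: contrapT => noE.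
have E0 k : P (E k) = 0%E.
  apply/eqP; rewrite eq_le measure_ge0 andbT leNgt; apply/negP => Ek.
  by apply: noE; exists k.
have [N [mN PN EN]] : P.-negligible (\bigcup_k E k).
  by apply: negligible_bigcup => k; exists (E k); split; [exact: mE|exact: E0|].
have : (P setT <= P N)%E.
  apply: le_measure; rewrite ?inE // => y _.
  by apply: EN; have [k Eky] := cover y; exists k.
by rewrite probability_setT PN lee_fin ler10.
Qed.

Section MetricFacts.
Variables (R : realType) (X : pointedType) (d : X -> X -> R).
Hypothesis hd : is_metric d.

Lemma d_ge0 x y : 0 <= d x y. Proof. by case: hd. Qed.
Lemma d_sym x y : d x y = d y x. Proof. by case: hd. Qed.
Lemma d_tri x y z : d x z <= d x y + d y z. Proof. by case: hd. Qed.
Lemma d_xx x : d x x = 0. Proof. by case: hd => _ h _ _; exact/h. Qed.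

Lemma measurable_dist x : measurable_fun setT (fun y : borel_d d => d x y).
Proof.
apply: (measurability _ (RGenOInfty.measurableE R)) => //.
move=> _ [_ [r ->] <-]; rewrite setTI; apply: sub_sigma_algebra => y /=.
rewrite in_itv /= andbT => ry; exists (d x y - r); first by rewrite subr_gt0.
move=> z; rewrite /dball /= in_itv /= andbT => yz.
by have := d_tri x z y; rewrite (d_sym z y); lra.
Qed.

Lemma measurable_eventually_dist_ge (u : nat -> X) x (e : R) k :
  measurable [set y : borel_d d | forall n, (k <= n)%N -> d x y + e <= d (u n) y].
Proof.
rewrite (_ : [set y | _] = \bigcap_(n in [set n | (k <= n)%N])
    [set y : borel_d d | d x y + e <= d (u n) y]); last first.
  by apply/seteqP; split => y /= h n /h.
apply: bigcap_measurableType => n _.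
have := measurable_fun_ler (measurable_funD (measurable_dist x) (measurable_cst e))
  (measurable_dist (u n)) measurableT (_ : measurable [set true]).
by rewrite setTI; apply.
Qed.

Definition d_seq_compact (K : set X) : Prop :=
  forall u : nat -> X, (forall n, K (u n)) ->
  exists (chi : nat -> nat) (x : X), [/\ {homo chi : n m / (n < m)%N}, K x &
    (fun n => d (u (chi n)) x) @ \oo --> (0 : R)].

Lemma d_separable_seq : d_separable d ->
  exists s : nat -> X, forall x e, 0 < e -> exists n, d x (s n) < e.
Proof.
move=> [D [/pcard_surjP[s sD] Ddense]]; exists s => x e e0.
have [y Dy xy] := Ddense x e e0; have [n _ sny] := sD y Dy.
by exists n; rewrite sny.
Qed.

Lemma dense_seq_ball_basis (s : nat -> X) (U : set X) x :
  (forall x e, 0 < e -> exists n, d x (s n) < e) -> d_open d U -> U x ->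
  exists n k, dball d (s n) k.+1%:R^-1 x /\ dball d (s n) k.+1%:R^-1 `<=` U.
Proof.
move=> sdense Uopen Ux; have [r r0 rU] := Uopen x Ux.
have [k kr] : exists k, k.+1%:R^-1 < r / 2.
  have r20 : 0 < r / 2 by lra.
  by have [k _ hk] := near_infty_natSinv_lt (PosNum r20); exists k; apply: hk => /=.
have k0 : 0 < k.+1%:R^-1 :> R by rewrite invr_gt0 ltr0Sn.
have [n xn] := sdense x _ k0; exists n, k; split; first by rewrite /dball /= d_sym.
move=> y; rewrite /dball /= => ny; apply: rU; rewrite /dball /=.
have := d_tri x (s n) y; move: kr xn ny; set q := (k.+1%:R^-1 : R); lra.
Qed.

Lemma seq_compact_d_compact (K : set X) :
  d_separable d -> d_seq_compact K -> d_compact d K.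
Proof.
move=> /d_separable_seq[s sdense] Kseq I U Uopen KU.
have [[z Kz]|/set0P/negP/negPn/eqP->] := pselect (K !=set0); last first.
  by exists set0 => // x.
have [i0 _ _] := KU z Kz.
pose B nk := dball d (s nk.1) nk.2.+1%:R^-1.
have /choice[idx idxP] : forall nk, exists i : I,
    (exists j, B nk `<=` U j) -> B nk `<=` U i.
  move=> nk.
  by have [[i Bi]|] := pselect (exists i, B nk `<=` U i); [exists i|exists i0].
suff [N KN] : exists N, forall x, K x ->
    exists n k, [/\ (n <= N)%N, (k <= N)%N & U (idx (n, k)) x].
  exists (idx @` (`I_N.+1 `*` `I_N.+1)).
    exact/finite_image/finite_setX; exact: finite_II.
  move=> x /KN[n [k [nN kN Ux]]].
  by exists (idx (n, k)) => //; exists (n, k).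
apply: contrapT => noN.
have /choice[xs xsP] : forall N, exists x, K x /\
    forall n k, (n <= N)%N -> (k <= N)%N -> ~ U (idx (n, k)) x.
  move=> N; apply: contrapT => allN.
  apply: noN; exists N => x Kx; apply: contrapT => Nx; apply: allN.
  by exists x; split => // n k nN kN Ux; apply: Nx; exists n, k.
have [chi [x [chi_incr Kx xsx]]] := Kseq xs (fun N => (xsP N).1).
have [i _ Uix] := KU x Kx.
have [n [k [Bx BU]]] := dense_seq_ball_basis sdense (Uopen i) Uix.
have BUidx : B (n, k) `<=` U (idx (n, k)) by apply: idxP; exists i.
have r0 : 0 < k.+1%:R^-1 - d (s n) x by rewrite subr_gt0; exact: Bx.
have chi_ge := mono_leq_infl (leq_mono chi_incr).
near \oo => j.
apply: (xsP (chi j)).2 (n) (k) _ _ (BUidx _ _).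
- by apply: leq_trans (chi_ge j); near: j; exists n.
- by apply: leq_trans (chi_ge j); near: j; exists k.
apply: le_lt_trans (d_tri (s n) x _) _.
rewrite -ltrBrDl d_sym -[d _ _]ger0_norm ?d_ge0 //.
by near: j; apply: cvgr0_norm_lt.
Unshelve. all: by end_near.
Qed.

End MetricFacts.

Section WeakConvergence.
Variables (R : realType) (X : pointedType) (d : X -> X -> R).
Hypothesis hd : is_metric d.
Variable w : (nat -> X) -> X -> Prop.
Hypothesis hw : is_weak_convergence d w.

Lemma weak_subseq_cvg (u : nat -> X) y (M : R) : (forall n, d (u n) y <= M) ->
  exists (phi : nat -> nat) x, {homo phi : n m / (n < m)%N} /\ w (u \o phi) x.
Proof. by case: hw => _ W1 _ _ uM; apply: W1; exists y, M. Qed.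

Lemma weak_dist_le u x y (M : R) : w u x -> (forall n, d (u n) y <= M) -> d x y <= M.
Proof.
case: hw => _ _ W2 _ wux uM; rewrite -lee_fin; apply: le_trans (W2 u x wux y) _.
by apply: limn_einf_le_frequently => N; exists N => //; rewrite lee_fin.
Qed.

Lemma weak_powR_dist_liminf u x y (p : R) : 0 < p -> w u x ->
  ((d x y `^ p)%:E <= limn_einf (fun n => (d (u n) y `^ p)%:E))%E.
Proof.
case: hw => _ _ W2 _ p0 wux; apply: limn_einf_ge_approx => e e0.
have [ape|eap] := ltP (d x y `^ p) e.
  by near=> n; rewrite lee_fin; have := powR_ge0 (d (u n) y) p; lra.
set t := (d x y `^ p - e) `^ p^-1.
have tpE : t `^ p = d x y `^ p - e.
  by rewrite /t -powRrM mulVf ?gt_eqF ?powRr1 // subr_ge0.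
have t_lt : (t%:E < limn_einf (fun n => (d (u n) y)%:E))%E.
  apply: lt_le_trans (W2 u x wux y); rewrite lte_fin ltNge; apply/negP => xt.
  by have := ge0_ler_powR (ltW p0) (d_ge0 hd _ _) (powR_ge0 _ _) xt; rewrite tpE; lra.
apply: filterS (limn_einf_gt_near t_lt) => n /ltW tu; rewrite lee_fin -tpE.
by apply: (ge0_ler_powR (ltW p0)); rewrite ?nnegrE ?powR_ge0 ?d_ge0 // -lee_fin.
Unshelve. all: by end_near.
Qed.

Lemma weak_cvg_dist u x y : w u x ->
  (forall e, 0 < e -> forall N, exists2 n, (N <= n)%N & d (u n) y < d x y + e) ->
  exists psi : nat -> nat, [/\ {homo psi : n m / (n < m)%N}, w (u \o psi) x &
    (fun n => d (u (psi n)) x) @ \oo --> (0 : R)].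
Proof.
case: hw => [[_ w_sub] _ W2 W3] wux freq.
have [psi [psi_incr cvg_psi]] := subseq_cvg_liminf (W2 u x wux y) freq.
have wpsi := w_sub _ _ _ psi_incr wux.
by exists psi; split => //; apply: W3 wpsi _; exists y.
Qed.

End WeakConvergence.

Section WpFunctional.
Variables (R : realType) (X : pointedType) (d : X -> X -> R).
Hypothesis hd : is_metric d.
Variables (p : R) (mu : probability (borel_d d) R) (x0 : X).
Hypothesis hp : 1 <= p.
Hypothesis hx0 : (\int[mu]_y ((d x0 y) `^ (p - 1))%:E < +oo)%E.
Local Notation T := (borel_d d).
Local Notation F x := (Wp d p mu x x0).
Local Notation g x y := (d x y `^ p - d x0 y `^ p).
Local Notation m y := (d x0 y `^ (p - 1)).

Let p_gt0 : 0 < p. Proof. exact: lt_le_trans ltr01 hp. Qed.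
Let p_ge0 : 0 <= p. Proof. exact: ltW p_gt0. Qed.

Lemma measurable_powR_dist x q : measurable_fun setT (fun y : T => d x y `^ q).
Proof. exact: measurableT_comp (measurable_powR q) (measurable_dist hd x). Qed.

Lemma integrable_moment : mu.-integrable setT (fun y => (m y)%:E).
Proof.
apply/integrableP; split.
  by apply/measurable_EFinP; exact: measurable_powR_dist.
by under eq_integral do rewrite gee0_abs ?lee_fin ?powR_ge0 //.
Qed.

Lemma powR_dist_sub_ge x y : - (p * d x x0 * m y) <= g x y.
Proof.
rewrite lerNl opprB; apply: le_trans (powR_sub_le hp (d_ge0 hd x y) (d_ge0 hd x0 y)) _.
rewrite ler_wpM2r ?powR_ge0 //; apply: ler_wpM2l => //.
by rewrite lerBlDr (d_sym hd x x0) d_tri.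
Qed.

Lemma powR_dist_sub_le x y : g x y <= p * d x x0 * (d x0 y + d x x0) `^ (p - 1).
Proof.
apply: le_trans (powR_sub_le hp (d_ge0 hd x0 y) (d_ge0 hd x y)) _.
have dx_le : d x y <= d x0 y + d x x0 by rewrite addrC d_tri.
apply: le_trans (_ : _ <= p * d x x0 * d x y `^ (p - 1)) _.
  by rewrite ler_wpM2r ?powR_ge0 //; apply: ler_wpM2l => //; rewrite lerBlDl.
rewrite ler_wpM2l ?mulr_ge0 ?(d_ge0 hd) //.
apply: ge0_ler_powR; first by rewrite subr_ge0.
all: by rewrite ?nnegrE ?addr_ge0 ?(d_ge0 hd).
Qed.

Lemma powR_dist_sub_abs_le x y :
  `|g x y| <= p * d x x0 * (d x0 y + d x x0) `^ (p - 1).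
Proof.
rewrite ler_norml powR_dist_sub_le andbT; apply: le_trans (powR_dist_sub_ge x y).
rewrite lerN2 ler_wpM2l ?mulr_ge0 ?(d_ge0 hd) //.
apply: ge0_ler_powR; first by rewrite subr_ge0.
all: by rewrite ?nnegrE ?addr_ge0 ?(d_ge0 hd) ?lerDl ?(d_ge0 hd).
Qed.

Lemma integrable_powR_dist_sub x : mu.-integrable setT (fun y => (g x y)%:E).
Proof.
set c := d x x0; have c0 : 0 <= c by exact: d_ge0.
set K := p * c * 2 `^ (p - 1); have K0 : 0 <= K by rewrite !mulr_ge0 ?powR_ge0.
apply: (@le_integrable _ _ _ mu setT measurableT _
  (fun y => (K * (m y + c `^ (p - 1)))%:E)).
- apply/measurable_EFinP; apply: measurable_funB; exact: measurable_powR_dist.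
- move=> y _; rewrite lee_fin [X in _ <= X]ger0_norm ?mulr_ge0 ?addr_ge0 ?powR_ge0 //.
  apply: le_trans (powR_dist_sub_abs_le x y) _.
  rewrite /K -[leRHS]mulrA ler_wpM2l ?mulr_ge0 //.
  by apply: powRD_le; rewrite ?subr_ge0 ?(d_ge0 hd).
- have h := integrableZl measurableT K (integrableD measurableT integrable_moment
    (finite_measure_integrable_cst mu (c `^ (p - 1)) measurableT)).
  apply: (eq_integrable measurableT _ _ _ h) => y _ /=.
  by rewrite -EFinD -EFinM.
Qed.

Lemma powR_dist_sub_ge_ball x y r : d x x0 <= r -> - (p * r * m y) <= g x y.
Proof.
move=> xr; apply: le_trans (powR_dist_sub_ge x y); rewrite lerN2.
by rewrite ler_wpM2r ?powR_ge0 // ler_wpM2l.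
Qed.

Lemma integrable_moment_scale k : mu.-integrable setT (fun y => (k * m y)%:E).
Proof.
apply: (eq_integrable measurableT _ _ _ (integrableZl measurableT k integrable_moment)).
by move=> y _; rewrite EFinM.
Qed.

Lemma Wp_fin_num x : F x \is a fin_num.
Proof. exact: (integrable_fin_num measurableT (integrable_powR_dist_sub x)). Qed.

Lemma Wp_x0 : F x0 = 0%E.
Proof. by rewrite /Wp; under eq_integral do rewrite subrr; rewrite integral0. Qed.

Lemma WpE x x' : Wp d p mu x x' = (F x - F x')%E.
Proof.
rewrite /Wp -integralB_EFin //; [|exact: integrable_powR_dist_sub..].
by apply: eq_integral => y _; rewrite -EFinB; congr EFin; ring.
Qed.

Lemma Mp_argmin x : Mp d p mu x <-> forall x', (F x <= F x')%E.
Proof.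
by split => h x'; [rewrite -sube_le0 -WpE|rewrite /= WpE sube_le0]; exact: h.
Qed.

Lemma Wp_ball_lbound r : exists c : R, forall x, d x x0 <= r -> (c%:E <= F x)%E.
Proof.
have Mfin := integrable_fin_num measurableT integrable_moment.
exists (- (p * r) * fine (\int[mu]_y (m y)%:E)%E) => x xr.
rewrite /Wp EFinM fineK // -integralZl //; last exact: integrable_moment.
apply: le_integral => //.
- exact: (integrableZl measurableT _ integrable_moment).
- exact: integrable_powR_dist_sub.
- by move=> y _; rewrite -EFinM lee_fin mulNr; exact: powR_dist_sub_ge_ball.
Qed.

Lemma Wp_fatou (u : nat -> X) r (L : T -> R) :
  (forall n, d (u n) x0 <= r) -> mu.-integrable setT (EFin \o L) ->
  (forall y : T, - (p * r * m y) <= L y) ->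
  (forall y, ((L y)%:E <= limn_einf (fun n => (g (u n) y)%:E))%E) ->
  (\int[mu]_y (L y)%:E <= limn_einf (fun n => F (u n)))%E.
Proof.
move=> ur iL Lge LG.
rewrite /Wp; apply: (fatou_minorant (G := fun n (y : T) => g (u n) y)
  (h := fun y : T => p * r * m y)) => //.
- by move=> n; exact: integrable_powR_dist_sub.
- exact: integrable_moment_scale.
- by move=> n y; exact: powR_dist_sub_ge_ball.
Qed.

Lemma powR_dist_sub_far x y : d x0 y + 1 <= d x x0 ->
  d x x0 - (d x0 y + d x0 y `^ p) <= g x y.
Proof.
move=> far; have := d_tri hd x y x0; rewrite (d_sym hd y x0) => tri.
have : d x y <= d x y `^ p by apply: le1r_powR => //; lra.
lra.
Qed.

Lemma Wp_coercive : exists2 r, 0 <= r & forall x, r < d x x0 -> (0 < F x)%E.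
Proof.
(* Otherwise Fatou applies to F (x_n) / d(x_n, x0) for some x_n -> oo with
   F (x_n) <= 0, whose integrands tend to at least 1. *)
apply: contrapT => nocoer.
have /choice[xs xsP] : forall n : nat, exists x, n%:R < d x x0 /\ (F x <= 0)%E.
  move=> n; apply: contrapT => hn; apply: nocoer; exists n%:R => // x nx.
  by rewrite ltNge; apply/negP => Fx; apply: hn; exists x.
pose c n := d (xs n) x0.
have c_gt0 n : 0 < c n by apply: le_lt_trans (xsP n).1.
have c_ge M : \forall n \near \oo, M <= c n.
  by apply: filterS (nbhs_infty_ger M) => n /le_trans; apply; exact/ltW/(xsP n).1.
have iG n : mu.-integrable setT (EFin \o (fun y : T => g (xs n) y / c n)).
  apply: (eq_integrable measurableT _ _ _
    (integrableZl measurableT (c n)^-1 (integrable_powR_dist_sub (xs n)))).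
  by move=> y _; rewrite /= -EFinM mulrC.
have Gge n (y : T) : - (p * m y) <= g (xs n) y / c n.
  by rewrite ler_pdivlMr // mulNr mulrAC; exact: powR_dist_sub_ge.
have Lge (y : T) : - (p * m y) <= 1.
  by apply: le_trans (_ : 0 <= 1) => //; rewrite oppr_le0 mulr_ge0 ?powR_ge0.
have LG (y : T) : ((1 : R)%:E <= limn_einf (fun n => (g (xs n) y / c n)%:E))%E.
  apply: limn_einf_ge_approx => e e0; set b := d x0 y.
  apply: filterS2 (c_ge (b + 1)) (c_ge ((b + b `^ p) / e)) => n cb ce.
  rewrite lee_fin ler_pdivlMr // mulrBl mul1r.
  apply: le_trans (powR_dist_sub_far cb); rewrite ler_pdivrMr // mulrC in ce.
  by rewrite lerB.
have intG n : (\int[mu]_y (g (xs n) y / c n)%:E = ((c n)^-1)%:E * F (xs n))%E.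
  rewrite /Wp -integralZl //; last exact: integrable_powR_dist_sub.
  by apply: eq_integral => y _; rewrite -EFinM mulrC.
have liminf_le0 : (limn_einf (fun n => \int[mu]_y (g (xs n) y / c n)%:E) <= 0)%E.
  apply: limn_einf_le_frequently => N; exists N => //; rewrite intG.
  by rewrite mule_ge0_le0 ?(xsP N).2 // lee_fin invr_ge0 ltW.
have int1 : (\int[mu]_y cst 1 y = 1)%E.
  by rewrite integral_cst // mul1e; exact: probability_setT.
have := le_trans (fatou_minorant iG (integrable_moment_scale p)
  (finite_measure_integrable_cst mu 1 measurableT) Gge Lge LG) liminf_le0.
by rewrite (eq_integral (cst 1%E)) // int1 lee_fin ler10.
Qed.

Variable w : (nat -> X) -> X -> Prop.
Hypothesis hw : is_weak_convergence d w.

Lemma powR_dist_sub_liminf u x y : w u x ->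
  ((g x y)%:E <= limn_einf (fun n => (g (u n) y)%:E))%E.
Proof.
move=> wux; rewrite (_ : (fun n => _) =
    fun n => ((- d x0 y `^ p)%:E + (d (u n) y `^ p)%:E)%E); last first.
  by apply/funext => n; rewrite -EFinD addrC.
rewrite limn_einf_shift // addrC EFinD leeD2lE //.
exact: (weak_powR_dist_liminf hd hw y p_gt0 wux).
Qed.

Lemma Wp_weak_lsc u x r : w u x -> (forall n, d (u n) x0 <= r) ->
  (F x <= limn_einf (fun n => F (u n)))%E.
Proof.
move=> wux ur; apply: (Wp_fatou (L := fun y => g x y) ur).
- exact: integrable_powR_dist_sub.
- by move=> y; apply: powR_dist_sub_ge_ball; exact: (weak_dist_le hw wux ur).
- by move=> y; exact: powR_dist_sub_liminf.
Qed.

Lemma Mp_nonempty : Mp d p mu !=set0.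
Proof.
have [r r0 far] := Wp_coercive; have [c cF] := Wp_ball_lbound r.
pose B := [set fine (F x) | x in [set x | d x x0 <= r]].
have B_inf : has_inf B.
  split; first by exists (fine (F x0)), x0; rewrite //= d_xx.
  by exists c => _ [x xr <-]; rewrite -lee_fin fineK ?Wp_fin_num ?cF.
have /choice[xs xsP] : forall n : nat, exists x,
    d x x0 <= r /\ fine (F x) < inf B + n.+1%:R^-1.
  move=> n; have n0 : 0 < n.+1%:R^-1 :> R by rewrite invr_gt0.
  by have [_ [x xr <-] xB] := inf_adherent n0 B_inf; exists x.
have [phi [x [phi_incr wx]]] := weak_subseq_cvg hw (fun n => (xsP n).1).
have Fx_le : (F x <= (inf B)%:E)%E.
  apply: le_trans (Wp_weak_lsc wx (fun n => (xsP (phi n)).1)) _.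
  apply/lee_addgt0Pr => e e0; apply: limn_einf_le_frequently => N.
  have [k _ ke] := near_infty_natSinv_lt (PosNum e0).
  exists (maxn N k); first exact: leq_maxl.
  have kphi : (k <= phi (maxn N k))%N.
    exact: leq_trans (leq_maxr N k) (mono_leq_infl (leq_mono phi_incr) _).
  rewrite -(fineK (Wp_fin_num _)) -EFinD lee_fin.
  have := (xsP (phi (maxn N k))).2; have := ke _ kphi; rewrite /=.
  set q := ((phi (maxn N k)).+1%:R^-1 : R); lra.
exists x; apply/Mp_argmin => x'; apply: le_trans Fx_le _.
have [x'r|x'far] := leP (d x' x0) r.
  by rewrite -(fineK (Wp_fin_num x')) lee_fin; apply: (ge_inf B_inf.2); exists x'.
apply: le_trans (ltW (far _ x'far)); rewrite lee_fin.
by apply: (ge_inf B_inf.2); exists x0; rewrite /= ?d_xx ?Wp_x0.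
Qed.

Lemma Mp_bounded : exists r, forall x, Mp d p mu x -> d x x0 <= r.
Proof.
have [r _ far] := Wp_coercive; exists r => x /Mp_argmin/(_ x0).
by rewrite Wp_x0 leNgt => /negP Fx; rewrite leNgt; apply/negP => /far.
Qed.

Lemma Mp_weak_closed u x : (forall n, Mp d p mu (u n)) -> w u x -> Mp d p mu x.
Proof.
move=> uM wux; have [r Mr] := Mp_bounded.
apply/Mp_argmin => x'; apply: le_trans (Wp_weak_lsc wux (fun n => Mr _ (uM n))) _.
by apply: limn_einf_le_frequently => N; exists N => //; have /Mp_argmin := uM N; apply.
Qed.

Lemma Wp_add_indic x (E : set T) (a : R) : measurable E ->
  (\int[mu]_y (g x y + a * \1_E y)%:E = F x + a%:E * mu E)%E.
Proof.
move=> mE; have iaE : mu.-integrable setT (EFin \o (fun y : T => a * \1_E y)).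
  apply: (eq_integrable measurableT _ _ _
    (integrableZl measurableT a (integrable_indic mu mE))).
  by move=> y _; rewrite /= EFinM.
have := integralD_EFin measurableT (integrable_powR_dist_sub x) iaE.
rewrite /= => ->; congr (_ + _)%E.
under eq_integral do rewrite EFinM.
by rewrite integralZl ?integral_indic ?setIT //; exact: integrable_indic.
Qed.

Lemma Mp_weak_recurrent u x : (forall n, Mp d p mu (u n)) -> w u x ->
  exists y, forall e, 0 < e -> forall N, exists2 n, (N <= n)%N & d (u n) y < d x y + e.
Proof.
move=> uM wux; have [r Mr] := Mp_bounded; have ur n := Mr _ (uM n).
have xr : d x x0 <= r := weak_dist_le hw wux ur.
apply: contrapT => /forallNP far.
pose E k := [set y : T | forall n, (k <= n)%N -> d x y + k.+1%:R^-1 <= d (u n) y].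
have mE k : measurable (E k) := measurable_eventually_dist_ge hd u x _ k.
have [k Ek_gt0] := probability_cover_gt0 mu mE (fun y => not_frequently_lt (far y)).
pose del : R := k.+1%:R^-1; have del0 : 0 <= del by rewrite invr_ge0.
pose L (y : T) := g x y + del `^ p * \1_(E k) y.
have iL : mu.-integrable setT (EFin \o L).
  apply: (eq_integrable measurableT _ _ _ (integrableD measurableT
    (integrable_powR_dist_sub x)
    (integrableZl measurableT (del `^ p) (integrable_indic mu (mE k))))).
  by move=> y _; rewrite /L /= !EFinD EFinM.
have Lge y : - (p * r * m y) <= L y.
  by rewrite -[leLHS]addr0 lerD ?mulr_ge0 ?powR_ge0 //; exact: powR_dist_sub_ge_ball.
have LG y : ((L y)%:E <= limn_einf (fun n => (g (u n) y)%:E))%E.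
  have [Eky|Eky] := pselect (E k y); last first.
    by rewrite /L indicE memNset // mulr0 addr0; exact: powR_dist_sub_liminf.
  apply: limn_einf_ge_near; exists k => // n /Eky kn.
  rewrite /L indicE mem_set // mulr1 lee_fin addrAC lerD2r.
  apply: le_trans (powR_superadd hp (d_ge0 hd x y) del0) _.
  by apply: ge0_ler_powR; rewrite ?nnegrE ?addr_ge0 ?(d_ge0 hd).
have lim_le : (limn_einf (fun n => F (u n)) <= F x)%E.
  by apply: limn_einf_le_frequently => N; exists N => //; have /Mp_argmin := uM N; apply.
have := le_trans (Wp_fatou ur iL Lge LG) lim_le.
rewrite Wp_add_indic // -[leRHS]adde0 leeD2lE ?Wp_fin_num // leNgt => /negP; apply.
by rewrite mule_gt0 // lte_fin powR_gt0 // invr_gt0.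
Qed.

Lemma Mp_seq_compact : d_seq_compact d (Mp d p mu).
Proof.
move=> u uM; have [r Mr] := Mp_bounded.
have [phi [x [phi_incr wx]]] := weak_subseq_cvg hw (fun n => Mr _ (uM n)).
have uphiM n : Mp d p mu ((u \o phi) n) := uM (phi n).
have [y yfreq] := Mp_weak_recurrent uphiM wx.
have [psi [psi_incr _ cvg_psi]] := weak_cvg_dist hw wx yfreq.
exists (phi \o psi), x; split => //; last exact: Mp_weak_closed uphiM wx.
by move=> n k nk; apply/phi_incr/psi_incr.
Qed.

End WpFunctional.

Theorem corollary3p10 (R : realType) (X : pointedType) (d : X -> X -> R)
  (hd : is_metric d) (hsep : d_separable d) (hw : admits_weak_convergence d)
  (p : R) (hp : 1 <= p) (mu : probability (borel_d d) R)
  (hmu : finite_moment d (p - 1) mu) :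
  Mp d p mu !=set0 /\ d_compact d (Mp d p mu).
Proof.
have [x0 hx0] := hmu; have [w hw'] := hw; split.
  exact: (Mp_nonempty hd hp hx0 hw').
exact/(seq_compact_d_compact hd hsep)/(Mp_seq_compact hd hp hx0 hw').
Qed.
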